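(* Let $k\ge1$, $G=(V,E)$ an inductively $k$-independent graph with $k$-independence ordering $v_1,\dots,v_n$, $f:2^V\to\mathbb{R}_{\ge0}$ monotone submodular with $f(\emptyset)=0$, and $\beta>0$. The algorithm PREEMPTIVE-GREEDY (described in the context) with parameter $\beta$ returns an independent set $S_{\mathrm{out}}$ of $G$ such that for every independent set $T$ of $G$, \[ f(T)\le\big(k(1+\beta)+1\big)\big(1+\beta^{-1}\big)\,f(S_{\mathrm{out}}). \]
   Context: $N(v)$ is the neighbourhood of $v$ (excluding $v$); $G$ is inductively $k$-independent with $k$-independence ordering $v_1,\dots,v_n$ if for every $i$, $G[N(v_i)\cap\{v_i,\dots,v_n\}]$ has no independent set of size more than $k$. Order $V$ by $v_1<v_2<\dots<v_n$. For $S\subseteq V$ and $v\in V$, $f_S(v)=f(S\cup\{v\})-f(S)$, and the incremental value of $u$ in $S$ is $\nu_f(S,u)=f_{S'}(u)$ where $S'=\{s\in S:s<u\}$. Algorithm PREEMPTIVE-GREEDY (parameter $\beta>0$): start with $S=\emptyset$; for $i=1,\dots,n$: let $C_i=N(v_i)\cap S$; if $f_S(v_i)\ge(1+\beta)\sum_{u\in C_i}\nu_f(S,u)$, replace $S$ by $(S\setminus C_i)\cup\{v_i\}$. Return the final $S$ as $S_{\mathrm{out}}$. *)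

(* Vertices are 'I_n; the ordering v_1 < ... < v_n is the
   natural order on 'I_n. A simple graph is a symmetric irreflexive rel. *)
From mathcomp Require Import all_boot all_order all_algebra.
Set Implicit Arguments. Unset Strict Implicit. Unset Printing Implicit Defensive.
Import Order.TTheory GRing.Theory Num.Theory.
Local Open Scope ring_scope.

Section Defs.
Variable n : nat.
Variable e : rel 'I_n.

Definition simple_graph : Prop := symmetric e /\ irreflexive e.

Definition nbhd (v : 'I_n) : {set 'I_n} := [set u | e v u].

Definition independent (S : {set 'I_n}) : Prop :=
  forall u v, u \in S -> v \in S -> ~~ e u v.

Definition inductively_k_independent (k : nat) : Prop :=
  forall (i : 'I_n) (I : {set 'I_n}),
    I \subset nbhd i :&: [set j : 'I_n | (i <= j)%N] -> independent I -> (#|I| <= k)%N.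

Variable R : realFieldType.
Variable f : {set 'I_n} -> R.

Definition monotone_fn : Prop := forall A B : {set 'I_n}, A \subset B -> f A <= f B.
Definition submodular_fn : Prop :=
  forall A B : {set 'I_n}, f (A :|: B) + f (A :&: B) <= f A + f B.
Definition nonneg_fn : Prop := forall A, 0 <= f A.

Definition marg (S : {set 'I_n}) (v : 'I_n) : R := f (v |: S) - f S.

Definition incr_value (S : {set 'I_n}) (u : 'I_n) : R :=
  marg [set s in S | (s < u)%N] u.

Variable beta : R.

Definition pg_step (S : {set 'I_n}) (v : 'I_n) : {set 'I_n} :=
  let C := nbhd v :&: S in
  if marg S v >= (1 + beta) * \sum_(u in C) incr_value S u
  then (S :\: C) :|: [set v] else S.

Definition preemptive_greedy : {set 'I_n} := foldl pg_step set0 (enum 'I_n).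

End Defs.

From mathcomp Require Import all_boot all_order all_algebra.
From mathcomp Require Import ring lra.
Import Order.TTheory GRing.Theory Num.Theory.
Local Open Scope ring_scope.

Set Implicit Arguments.
Unset Strict Implicit.
Unset Printing Implicit Defensive.

(* Every acceptance of a vertex v evicts its conflicts C but gains at least
   (1 + beta) times their incremental value, so the running value f S grows by at
   least beta times everything ever evicted: the total evicted value r satisfies
   beta * r <= f S_out, and the set A of all vertices ever accepted has
   f A <= f S_out + r.  To compare with an independent set T, charge each t in T
   to its earlier neighbours in the current solution: a rejected t has marginal
   gain below (1 + beta) times the incremental values of its conflicts, each of
   which takes one more charge, while an accepted t lies in A.  A vertex has at
   most k later independent neighbours, so the charges total at most
   k (f S_out + r), whence
   f T <= f A + (1 + beta) k (f S_out + r) <= (k (1 + beta) + 1) (1 + 1/beta) f S_out. *)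

Definition prefix n (S : {set 'I_n}) (m : nat) : {set 'I_n} := [set s in S | (s < m)%N].

Lemma prefix0 n (S : {set 'I_n}) : prefix S 0 = set0.
Proof. by apply/setP => s; rewrite !inE ltn0 andbF. Qed.

Lemma prefix_id n (S : {set 'I_n}) : prefix S n = S.
Proof. by apply/setP => s; rewrite inE ltn_ord andbT. Qed.

Lemma prefixS n (S : {set 'I_n}) (v : 'I_n) :
  prefix S v.+1 = if v \in S then v |: prefix S v else prefix S v.
Proof.
case: ifP => vS; apply/setP => s; rewrite !inE ltnS leq_eqVlt val_eqE;
  by case: (eqVneq s v) => [->|] //=; rewrite ?vS ?ltnn.
Qed.

Lemma notin_prefix n (S : {set 'I_n}) (v : 'I_n) :
  S \subset [set u : 'I_n | (u < v)%N] -> v \notin S.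
Proof. by move=> /subsetP S_lt_v; apply/negP => /S_lt_v; rewrite inE ltnn. Qed.

Section Submodular.
Variables (n : nat) (R : realFieldType) (f : {set 'I_n} -> R).

Lemma marg_setU1 (S : {set 'I_n}) v : f (v |: S) = f S + marg f S v.
Proof. by rewrite /marg addrC subrK. Qed.

Lemma incr_value_setU1_gt (D : {set 'I_n}) (u v : 'I_n) :
  (u < v)%N -> incr_value f (v |: D) u = incr_value f D u.
Proof.
move=> lt_uv; rewrite /incr_value; congr (marg f _ _); apply/setP => s; rewrite !inE.
by case: eqVneq => [->|//]; rewrite ltnNge (ltnW lt_uv) !andbF.
Qed.

Lemma incr_value_setU1_last (D : {set 'I_n}) (v : 'I_n) :
  D \subset [set u : 'I_n | (u < v)%N] -> incr_value f (v |: D) v = marg f D v.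
Proof.
move=> /subsetP sub_D; rewrite /incr_value; congr (marg f _ _); apply/setP => s; rewrite !inE.
case: eqVneq => [->|_] /=; last by apply/andb_idr => /sub_D; rewrite inE.
by rewrite ltnn; apply/esym/negbTE/negP => /sub_D; rewrite inE ltnn.
Qed.

Lemma sum_incr_value (S : {set 'I_n}) :
  f set0 = 0 -> \sum_(u in S) incr_value f S u = f S.
Proof.
move=> f0; suff sum_prefix m : (m <= n)%N ->
    \sum_(u in prefix S m) incr_value f S u = f (prefix S m).
  by have := sum_prefix n (leqnn n); rewrite prefix_id.
elim: m => [|m IH] lt_mn; first by rewrite prefix0 big_set0 f0.
pose v := Ordinal lt_mn; rewrite -[m]/(val v) prefixS.
case: ifP => vS; last exact: IH (ltnW lt_mn).
rewrite big_setU1 ?inE ?ltnn ?andbF //= IH ?(ltnW lt_mn) // marg_setU1.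
by rewrite addrC.
Qed.

Hypothesis f_mono : monotone_fn f.

Lemma marg_ge0 (S : {set 'I_n}) v : 0 <= marg f S v.
Proof. by rewrite subr_ge0; apply/f_mono/subsetUr. Qed.

Lemma incr_value_ge0 (S : {set 'I_n}) u : 0 <= incr_value f S u.
Proof. exact: marg_ge0. Qed.

Hypothesis f_sub : submodular_fn f.

Lemma marg_subset_le (A B : {set 'I_n}) v : A \subset B -> marg f B v <= marg f A v.
Proof.
move=> sub_AB; case: (boolP (v \in B)) => vB.
  by rewrite /marg (setUidPr _) ?sub1set // subrr marg_ge0.
have := f_sub (v |: A) B.
rewrite -setUA (setUidPr sub_AB) setIUl (setIidPl sub_AB).
rewrite (_ : [set v] :&: B = set0) ?set0U; last first.
  by apply/setP => s; rewrite !inE; case: eqVneq => // ->; rewrite (negbTE vB).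
rewrite /marg; lra.
Qed.

Lemma incr_value_subset_le (D S : {set 'I_n}) u :
  D \subset S -> incr_value f S u <= incr_value f D u.
Proof.
move=> /subsetP sub_DS; apply: marg_subset_le; apply/subsetP => s.
by rewrite !inE => /andP[/sub_DS -> ->].
Qed.

Lemma incr_value_le_setU1 (D S : {set 'I_n}) (u v : 'I_n) :
  S \subset [set w : 'I_n | (w < v)%N] -> D \subset S -> u \in D ->
  incr_value f S u <= incr_value f (v |: D) u.
Proof.
move=> /subsetP S_lt_v /subsetP sub_DS Du.
have lt_uv : (u < v)%N by have := S_lt_v u (sub_DS u Du); rewrite inE.
by rewrite incr_value_setU1_gt ?incr_value_subset_le //; apply/subsetP.
Qed.

End Submodular.

Section PreemptiveGreedy.
Variables (n k : nat) (e : rel 'I_n) (R : realFieldType) (f : {set 'I_n} -> R) (beta : R).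

Lemma preemptive_greedy_ind (P : nat -> {set 'I_n} -> Prop) :
  P 0 set0 -> (forall (v : 'I_n) S, P v S -> P v.+1 (pg_step e f beta S v)) ->
  P n (preemptive_greedy e f beta).
Proof.
move=> P0 PS; pose run m := foldl (pg_step e f beta) set0 (take m (enum 'I_n)).
suff run_P m : (m <= n)%N -> P m (run m).
  by have := run_P n (leqnn n); rewrite /run -[X in take X _](size_enum_ord n) take_size.
elim: m => [|m IH] lt_mn; first by rewrite /run take0.
pose v := Ordinal lt_mn; rewrite -[m]/(val v) /run (take_nth v) ?size_enum_ord //.
by rewrite foldl_rcons nth_ord_enum; apply/PS/IH/ltnW.
Qed.

Definition conflicts (S : {set 'I_n}) (v : 'I_n) : {set 'I_n} := nbhd e v :&: S.

Lemma sum_conflicts (F : 'I_n -> R) (S : {set 'I_n}) v :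
  \sum_(u in S) F u = \sum_(u in conflicts S v) F u + \sum_(u in S :\: conflicts S v) F u.
Proof. by rewrite (big_setID (conflicts S v)) (setIidPr (subsetIr _ _)). Qed.

Lemma mem_setD_conflicts (S : {set 'I_n}) v u :
  (u \in S :\: conflicts S v) = (u \in S) && ~~ e v u.
Proof. by rewrite !inE; case: (u \in S); rewrite ?andbT ?andbF. Qed.

Hypotheses (e_sym : symmetric e) (e_irr : irreflexive e).

Lemma pg_step_independent (S : {set 'I_n}) v :
  independent e S -> independent e (pg_step e f beta S v).
Proof.
rewrite /pg_step; case: ifP => // _ indS x y.
rewrite !in_setU !in_set1 -/(conflicts S v) !mem_setD_conflicts.
move=> /orP[/andP[Sx vx]|/eqP->] /orP[/andP[Sy vy]|/eqP->]; first exact: indS.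
- by rewrite e_sym.
- by [].
- by rewrite e_irr.
Qed.

Variable T : {set 'I_n}.
Hypotheses (e_ind : inductively_k_independent e k) (T_indep : independent e T).

Definition later_nbrs (m : nat) (u : 'I_n) : {set 'I_n} :=
  [set t in T | [&& (u < t)%N, (t < m)%N & e u t]].

Lemma card_later_nbrs_le m u : (#|later_nbrs m u| <= k)%N.
Proof.
apply: (@e_ind u); last by move=> x y; rewrite !inE => /andP[Tx _] /andP[Ty _]; exact: T_indep.
by apply/subsetP => t; rewrite !inE => /and4P[_ /ltnW -> _ ->].
Qed.

Lemma later_nbrsS m u : later_nbrs m u \subset later_nbrs m.+1 u.
Proof. by apply/subsetP => t; rewrite !inE ltnS => /and4P[-> -> /ltnW -> ->]. Qed.

Lemma card_later_nbrs_ltS (u v : 'I_n) :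
  v \in T -> (u < v)%N -> e u v -> (#|later_nbrs v u| < #|later_nbrs v.+1 u|)%N.
Proof.
move=> Tv lt_uv euv; apply/proper_card/properP; split; first exact: later_nbrsS.
by exists v; rewrite !inE ?ltnn ?andbF // Tv lt_uv euv ltnSn.
Qed.

Definition potential (S : {set 'I_n}) (m : nat) : R :=
  \sum_(u in S) #|later_nbrs m u|%:R * incr_value f S u.

Hypotheses (f_mono : monotone_fn f) (f_sub : submodular_fn f) (f0 : f set0 = 0).

Lemma potential_le (S : {set 'I_n}) m : potential S m <= k%:R * f S.
Proof.
rewrite -(sum_incr_value S f0) mulr_sumr; apply: ler_sum => u _.
by rewrite ler_wpM2r ?incr_value_ge0 // ler_nat card_later_nbrs_le.
Qed.

Lemma potential_leS (S : {set 'I_n}) m : potential S m <= potential S m.+1.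
Proof.
apply: ler_sum => u _.
by rewrite ler_wpM2r ?incr_value_ge0 // ler_nat subset_leq_card ?later_nbrsS.
Qed.

Lemma potential_conflicts_leS (S : {set 'I_n}) (v : 'I_n) :
  v \in T -> S \subset [set u : 'I_n | (u < v)%N] ->
  potential S v + \sum_(u in conflicts S v) incr_value f S u <= potential S v.+1.
Proof.
move=> Tv /subsetP S_lt_v; rewrite /potential !(sum_conflicts _ S v) addrAC -big_split /=.
apply: lerD; last first.
  apply: ler_sum => u _.
  by rewrite ler_wpM2r ?incr_value_ge0 // ler_nat subset_leq_card ?later_nbrsS.
apply: ler_sum => u; rewrite !inE => /andP[evu Su].
have lt_uv : (u < v)%N by have := S_lt_v u Su; rewrite inE.
have := card_later_nbrs_ltS Tv lt_uv; rewrite e_sym evu -(ler_nat R) -natr1 => /(_ isT).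
by move=> /(ler_wpM2r (incr_value_ge0 f_mono S u)); rewrite mulrDl mul1r.
Qed.

Lemma potential_le_accept (S : {set 'I_n}) (v : 'I_n) :
  S \subset [set u : 'I_n | (u < v)%N] ->
  potential S v <= potential (v |: (S :\: conflicts S v)) v.+1
                   + k%:R * \sum_(u in conflicts S v) incr_value f S u.
Proof.
move=> S_lt_v; set D := S :\: conflicts S v.
have D_lt_v : D \subset [set u : 'I_n | (u < v)%N].
  by apply: subset_trans S_lt_v; apply: subsetDl.
rewrite /potential (sum_conflicts _ S v) -/D big_setU1 ?notin_prefix //= mulr_sumr.
have C_le : \sum_(u in conflicts S v) #|later_nbrs v u|%:R * incr_value f S u
         <= \sum_(u in conflicts S v) k%:R * incr_value f S u.
  by apply: ler_sum => u _; rewrite ler_wpM2r ?incr_value_ge0 // ler_nat card_later_nbrs_le.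
have D_le : \sum_(u in D) #|later_nbrs v u|%:R * incr_value f S u
         <= \sum_(u in D) #|later_nbrs v.+1 u|%:R * incr_value f (v |: D) u.
  apply: ler_sum => u Du; apply: ler_pM; rewrite ?ler0n ?incr_value_ge0 //.
    by rewrite ler_nat subset_leq_card ?later_nbrsS.
  exact: incr_value_le_setU1 S_lt_v (subsetDl _ _) Du.
have := mulr_ge0 (ler0n _ #|later_nbrs v.+1 v|) (incr_value_ge0 f_mono (v |: D) v).
lra.
Qed.

Lemma value_le_accept (S : {set 'I_n}) (v : 'I_n) :
  S \subset [set u : 'I_n | (u < v)%N] ->
  f S - \sum_(u in conflicts S v) incr_value f S u + marg f (S :\: conflicts S v) v
    <= f (v |: (S :\: conflicts S v)).
Proof.
move=> S_lt_v; set D := S :\: conflicts S v.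
have D_lt_v : D \subset [set u : 'I_n | (u < v)%N].
  by apply: subset_trans S_lt_v; apply: subsetDl.
rewrite -!(sum_incr_value _ f0) (sum_conflicts _ S v) -/D big_setU1 ?notin_prefix //=.
rewrite incr_value_setU1_last //.
have : \sum_(u in D) incr_value f S u <= \sum_(u in D) incr_value f (v |: D) u.
  by apply: ler_sum => u; apply: incr_value_le_setU1 S_lt_v (subsetDl _ _).
lra.
Qed.

Hypothesis beta_gt0 : 0 < beta.

Let beta1_ge0 : 0 <= 1 + beta.
Proof. by rewrite addr_ge0 // ltW. Qed.

(* A holds every vertex accepted so far and r the incremental value evicted so
   far, measured when the evicting vertex was processed. *)
Record pg_invariant (m : nat) (S A : {set 'I_n}) (r : R) : Prop := PgInvariant {
  pg_inv_prefix : S \subset [set u : 'I_n | (u < m)%N];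
  pg_inv_accepted : S \subset A;
  pg_inv_lost_ge0 : 0 <= r;
  pg_inv_lost_le : beta * r <= f S;
  pg_inv_accepted_le : f A <= f S + r;
  pg_inv_opt_le : f (prefix T m :|: A) <= f A + (1 + beta) * (potential S m + k%:R * r) }.

Lemma pg_invariant0 : pg_invariant 0 set0 set0 0.
Proof.
by split; rewrite ?sub0set ?prefix0 ?setU0 /potential ?big_set0 ?f0 //; lra.
Qed.

Lemma pg_invariant_accept (S A : {set 'I_n}) r (v : 'I_n) :
  let c := \sum_(u in conflicts S v) incr_value f S u in
  pg_invariant v S A r -> (1 + beta) * c <= marg f S v ->
  pg_invariant v.+1 (v |: (S :\: conflicts S v)) (v |: A) (r + c).
Proof.
move=> c [S_lt_v SA r_ge0 r_le A_le TA_le] accept; set D := S :\: conflicts S v.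
have c_ge0 : 0 <= c by apply: sumr_ge0 => u _; apply: incr_value_ge0 f_mono _ _.
have gain : f S - c + marg f D v <= f (v |: D) := value_le_accept S_lt_v.
have margS : marg f S v <= marg f D v.
  by apply: (marg_subset_le f_mono f_sub); apply: subsetDl.
have margA : marg f A v <= marg f D v.
  by apply: (marg_subset_le f_mono f_sub); apply: subset_trans SA; apply: subsetDl.
split.
- apply/subsetP => s; rewrite in_setU1 => /predU1P[->|/setDP[/(subsetP S_lt_v)]].
    by rewrite inE.
  by rewrite !inE => /ltnW.
- by apply: setUS; apply: subset_trans SA; apply: subsetDl.
- exact: addr_ge0.
- by rewrite -/D mulrDr; lra.
- by rewrite marg_setU1 -/D; lra.
have -> : prefix T v.+1 :|: (v |: A) = v |: (prefix T v :|: A).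
  apply/setP => s; rewrite !inE ltnS leq_eqVlt val_eqE.
  by case: eqVneq => [->|]; rewrite ?orbT.
have margTA : marg f (prefix T v :|: A) v <= marg f A v.
  by apply: (marg_subset_le f_mono f_sub); apply: subsetUr.
have := ler_wpM2l beta1_ge0 (potential_le_accept S_lt_v).
rewrite -/c !marg_setU1 -/D; lra.
Qed.

Lemma pg_invariant_reject (S A : {set 'I_n}) r (v : 'I_n) :
  pg_invariant v S A r ->
  marg f S v < (1 + beta) * \sum_(u in conflicts S v) incr_value f S u ->
  pg_invariant v.+1 S A r.
Proof.
move=> [S_lt_v SA r_ge0 r_le A_le TA_le] reject; split => //.
  by apply: subset_trans S_lt_v _; apply/subsetP => s; rewrite !inE => /ltnW.
have growth := ler_wpM2l beta1_ge0 (potential_leS S v).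
rewrite prefixS; case: ifP => Tv; last by lra.
have margTA : marg f (prefix T v :|: A) v <= marg f S v.
  by apply: (marg_subset_le f_mono f_sub); apply: subset_trans SA _; apply: subsetUr.
have := ler_wpM2l beta1_ge0 (potential_conflicts_leS Tv S_lt_v).
by rewrite -setUA marg_setU1; lra.
Qed.

Lemma pg_invariant_step (S A : {set 'I_n}) r (v : 'I_n) :
  pg_invariant v S A r -> exists A' r', pg_invariant v.+1 (pg_step e f beta S v) A' r'.
Proof.
move=> inv; rewrite /pg_step -/(conflicts S v); case: ifP => [accept|/negbT].
  by rewrite setUC; do 2!eexists; apply: pg_invariant_accept inv accept.
by rewrite -ltNge => reject; exists A, r; exact: pg_invariant_reject.
Qed.

Lemma pg_invariant_bound (S A : {set 'I_n}) r :
  pg_invariant n S A r -> f T <= ((k%:R * (1 + beta) + 1) * (1 + beta^-1)) * f S.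
Proof.
move=> [_ _ r_ge0 r_le A_le]; rewrite prefix_id => TA_le.
have T_le : f T <= f (T :|: A) by apply/f_mono/subsetUl.
have := ler_wpM2l beta1_ge0 (potential_le S n).
have K_ge0 : 0 <= k%:R * (1 + beta) + 1 by rewrite addr_ge0 ?mulr_ge0.
have : r <= f S / beta by rewrite ler_pdivlMr // mulrC.
move=> /(lerD (lexx (f S))) /(ler_wpM2l K_ge0).
lra.
Qed.

End PreemptiveGreedy.

Theorem theorem6 (R : realFieldType) (n k : nat) (e : rel 'I_n)
  (f : {set 'I_n} -> R) (beta : R) :
  (1 <= k)%N ->
  simple_graph e ->
  inductively_k_independent e k ->
  nonneg_fn f -> monotone_fn f -> submodular_fn f -> f set0 = 0 ->
  0 < beta ->
  independent e (preemptive_greedy e f beta) /\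
  forall T : {set 'I_n}, independent e T ->
    f T <= ((k%:R * (1 + beta) + 1) * (1 + beta^-1)) * f (preemptive_greedy e f beta).
Proof.
move=> _ [e_sym e_irr] e_ind _ f_mono f_sub f0 beta_gt0; split.
  apply: (preemptive_greedy_ind (P := fun _ S => independent e S)) => [u w|v S].
    by rewrite inE.
  exact: pg_step_independent.
move=> T T_indep.
have [A [r inv]] : exists A r, pg_invariant k e f beta T n (preemptive_greedy e f beta) A r.
  pose P m S := exists A r, pg_invariant k e f beta T m S A r.
  apply: (preemptive_greedy_ind (P := P)).
    by exists set0, 0; exact: pg_invariant0.
  by move=> v S [A [r inv]]; exact: pg_invariant_step inv.
exact: pg_invariant_bound inv.
Qed.
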